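(* Let $H$ be a Hermitian operator on a $d$-dimensional Hilbert space with spectral decomposition $H=\sum_{i=1}^M\lambda_i\Pi_i$, where $\lambda_M>\cdots>\lambda_1$ are the distinct eigenvalues and $\Pi_i$ the spectral projections ($\Pi_i\Pi_j=\delta_{ij}\Pi_i$, $\sum_i\Pi_i=I$), and let $\beta\ge 0$. Write $\gamma=\frac{\Pi_1}{\operatorname{Tr}[\Pi_1]}$ and $\tau_\beta=\frac{e^{-\beta H}}{\operatorname{Tr}[e^{-\beta H}]}$. Then $$\frac{1}{2}\|\tau_\beta-\gamma\|_1=1-F(\tau_\beta,\gamma)\qquad\text{and}\qquad D(\gamma\|\tau_\beta)=-\ln F(\tau_\beta,\gamma).$$
   Context: $\|A\|_1=\operatorname{Tr}[\sqrt{A^\dagger A}]$; $F(\rho,\sigma)=\|\sqrt{\rho}\sqrt{\sigma}\|_1^2$ is the fidelity; $D(\rho\|\sigma)=\operatorname{Tr}[\rho(\ln\rho-\ln\sigma)]$ is the quantum relative entropy. *)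

From HB Require Import structures.
From mathcomp Require Import all_boot all_order all_algebra.
From mathcomp Require Import sesquilinear spectral.
From mathcomp Require Import complex.
From mathcomp Require Import reals sequences exp.

Set Implicit Arguments.
Unset Strict Implicit.
Unset Printing Implicit Defensive.

Import Order.TTheory GRing.Theory Num.Theory.
Local Open Scope ring_scope.

Definition adjmx (R : rcfType) m n (A : 'M[R[i]]_(m, n)) : 'M[R[i]]_(n, m) :=
  map_mx (@Num.conj _) A^T.

Definition herm_op (R : rcfType) n (A : 'M[R[i]]_n) : Prop := adjmx A = A.

(* Functional calculus for a Hermitian matrix, via the spectral theorem
   (A = P^-1 diag(sp) P with P unitary, sp real):
   f(A) := P^-1 diag(f(sp)) P. *)
Definition mxfun (R : rcfType) n (f : R -> R) (A : 'M[R[i]]_n) : 'M[R[i]]_n :=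
  invmx (spectralmx A) *m
  diag_mx (map_mx (fun z : R[i] => ((f (complex.Re z))%:C)%C) (spectral_diag A))
  *m spectralmx A.

Definition mxsqrt (R : rcfType) n (A : 'M[R[i]]_n) := mxfun (@Num.sqrt R) A.
Definition mxexp (R : realType) n (A : 'M[R[i]]_n) := mxfun (@expR R) A.
(* ln is applied to the spectrum; the value at eigenvalue 0 is irrelevant
   in D(rho||sigma) for rho's kernel (it is multiplied by 0). *)
Definition mxln (R : realType) n (A : 'M[R[i]]_n) := mxfun (@ln R) A.

(* Trace norm ||A||_1 = Tr sqrt(A^dagger A)  (the trace is real; we take
   its real part to obtain an element of R). *)
Definition trnorm (R : rcfType) n (A : 'M[R[i]]_n) : R :=
  complex.Re (\tr (mxsqrt (adjmx A *m A))).

Definition fidelity (R : rcfType) n (rho sigma : 'M[R[i]]_n) : R :=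
  trnorm (mxsqrt rho *m mxsqrt sigma) ^+ 2.

Definition relent (R : realType) n (rho sigma : 'M[R[i]]_n) : R :=
  complex.Re (\tr (rho *m (mxln rho - mxln sigma))).

From HB Require Import structures.
From mathcomp Require Import all_boot all_order all_algebra.
From mathcomp Require Import sesquilinear spectral complex.
From mathcomp Require Import reals sequences exp.
From mathcomp Require Import ring.
Import Order.TTheory GRing.Theory Num.Theory.
Local Open Scope ring_scope.
Set Implicit Arguments.
Unset Strict Implicit.

(* Proof idea: every matrix in the statement (H, exp(-beta H), gamma, tau, their
   square roots, logarithms and differences) is a real combination
   \sum_i x_i Pi_i of the spectral projections.  On such combinations products
   and the functional calculus act coefficientwise and Tr = \sum_i x_i Tr Pi_i,
   so the three quantities become classical: with p the weight of tau on the
   block Pi_1, one gets F = p, (1/2)||tau - gamma||_1 = 1 - p and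
   D(gamma||tau) = -ln p, because gamma is the normalised projector onto that
   single block. *)

Lemma herm_op_normalmx (R : rcfType) n (A : 'M[R[i]]_n) :
  herm_op A -> A \is normalmx.
Proof. by rewrite qualifE /herm_op /adjmx => ->. Qed.

Lemma diag_mx_eigen_map (K : idomainType) n m (s : 'rV[K]_n) (g : K -> K)
    (X : 'M[K]_(n, m)) c :
  diag_mx s *m X = c *: X -> diag_mx (map_mx g s) *m X = g c *: X.
Proof.
move/matrixP=> sX; apply/matrixP=> k l; move: (sX k l).
rewrite !mul_diag_mx !mxE.
have [->|Xkl_neq0] := eqVneq (X k l) 0; first by rewrite !mulr0.
by move/(mulIf Xkl_neq0) ->.
Qed.

(* The unitary P of the spectral theorem conjugates each Pi i into an
   eigen-block of the diagonal matrix, on which the map f acts by f (c i). *)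
Lemma mxfun_resolution (R : rcfType) n (I : finType) (A : 'M[R[i]]_n)
    (Pi : I -> 'M[R[i]]_n) (c : I -> R) (f : R -> R) :
  A \is normalmx -> (forall i, A *m Pi i = (c i)%:C%C *: Pi i) ->
  \sum_i Pi i = 1%:M ->
  mxfun f A = \sum_i (f (c i))%:C%C *: Pi i.
Proof.
move=> /orthomx_spectralP A_spectral A_Pi Pi_sum.
have P_unit := spectral_unit A.
set P := spectralmx A in A_spectral P_unit *.
set s := spectral_diag A in A_spectral *.
pose Q i := P *m Pi i *m invmx P.
have diag_sE : diag_mx s = P *m A *m invmx P.
  by rewrite [in RHS]A_spectral !mulmxA mulmxV // mul1mx -!mulmxA mulmxV // mulmx1.
have diag_s_Q i : diag_mx s *m Q i = (c i)%:C%C *: Q i.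
  rewrite diag_sE /Q !mulmxA -(mulmxA _ (invmx P)) mulVmx // mulmx1.
  by rewrite -(mulmxA P A) A_Pi -scalemxAr -!scalemxAl.
have Q_sum : \sum_i Q i = 1%:M.
  by rewrite /Q -mulmx_suml -mulmx_sumr Pi_sum mulmx1 mulmxV.
rewrite /mxfun -/P -[diag_mx _]mulmx1 -Q_sum !mulmx_sumr mulmx_suml.
apply: eq_bigr => i _.
rewrite (diag_mx_eigen_map _ (diag_s_Q i)) /= -scalemxAr -scalemxAl /Q.
by rewrite !mulmxA mulVmx // mul1mx -mulmxA mulVmx // mulmx1.
Qed.

Lemma mxtrace_herm_idem (R : rcfType) n (P : 'M[R[i]]_n) :
  herm_op P -> P *m P = P -> \tr P = \sum_k \sum_l `|P k l| ^+ 2.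
Proof.
move=> P_herm P_idem.
rewrite -[in LHS]P_idem -[X in P *m X]P_herm /mxtrace.
apply: eq_bigr => k _; rewrite mxE; apply: eq_bigr => l _.
by rewrite !mxE normCK.
Qed.

Lemma mxtrace_herm_idem_gt0 (R : rcfType) n (P : 'M[R[i]]_n) :
  herm_op P -> P *m P = P -> P != 0 -> 0 < \tr P.
Proof.
move=> P_herm P_idem P_neq0; rewrite mxtrace_herm_idem //.
have sq_ge0 k l : 0 <= `|P k l| ^+ 2 :> R[i] by exact: exprn_ge0.
rewrite lt0r sumr_ge0 ?andbT => [|k _]; last exact: sumr_ge0.
apply: contra P_neq0 => /eqP rows_eq0; apply/eqP/matrixP => k l.
have row_eq0 : \sum_l `|P k l| ^+ 2 = 0.
  by apply: (psumr_eq0P _ rows_eq0) => // k' _; apply: sumr_ge0.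
have /eqP : `|P k l| ^+ 2 = 0 by apply: (psumr_eq0P _ row_eq0).
by rewrite mxE expf_eq0 /= normr_eq0 => /eqP.
Qed.

Section ProjectorCombination.
Variables (R : rcfType) (I : finType) (d : nat) (Pi : I -> 'M[R[i]]_d).
Hypothesis Pi_herm : forall i, herm_op (Pi i).
Hypothesis Pi_orth : forall i j, Pi i *m Pi j = if i == j then Pi i else 0.
Hypothesis Pi_sum : \sum_i Pi i = 1%:M.

Definition projcomb (x : I -> R) := \sum_i (x i)%:C%C *: Pi i.

Definition prank i := complex.Re (\tr (Pi i)).

Lemma projcomb_mulmx_proj x j : projcomb x *m Pi j = (x j)%:C%C *: Pi j.
Proof.
rewrite /projcomb mulmx_suml (bigD1 j) //= big1 ?addr0 => [|i /negbTE ij].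
  by rewrite -scalemxAl Pi_orth eqxx.
by rewrite -scalemxAl Pi_orth ij scaler0.
Qed.

Lemma projcombM x y : projcomb x *m projcomb y = projcomb (fun i => x i * y i).
Proof.
rewrite {2}/projcomb mulmx_sumr; apply: eq_bigr => i _.
by rewrite -scalemxAr projcomb_mulmx_proj scalerA -rmorphM mulrC.
Qed.

Lemma projcombB x y : projcomb x - projcomb y = projcomb (fun i => x i - y i).
Proof. by rewrite -sumrB; apply: eq_bigr => i _; rewrite rmorphB scalerBl. Qed.

Lemma projcombZ a x : a%:C%C *: projcomb x = projcomb (fun i => a * x i).
Proof. by rewrite scaler_sumr; apply: eq_bigr => i _; rewrite scalerA rmorphM. Qed.

Lemma herm_op_projcomb x : herm_op (projcomb x).
Proof.
apply/matrixP => k l; rewrite !mxE !summxE rmorph_sum; apply: eq_bigr => i _.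
rewrite !mxE rmorphM -[Pi i in RHS]Pi_herm !mxE; congr (_ * _).
exact: conjc_real.
Qed.

Lemma mxfun_projcomb f x : mxfun f (projcomb x) = projcomb (fun i => f (x i)).
Proof.
apply: mxfun_resolution => //; last exact: projcomb_mulmx_proj.
exact/herm_op_normalmx/herm_op_projcomb.
Qed.

Lemma mxtrace_proj i : \tr (Pi i) = (prank i)%:C%C.
Proof.
apply/esym/RRe_real/ger0_real; rewrite mxtrace_herm_idem ?Pi_orth ?eqxx //.
by apply: sumr_ge0 => k _; apply: sumr_ge0 => l _; exact: exprn_ge0.
Qed.

Lemma prank_gt0 i : Pi i != 0 -> 0 < prank i.
Proof.
by move=> Pi_neq0; rewrite -ltcR -mxtrace_proj mxtrace_herm_idem_gt0 ?Pi_orth ?eqxx.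
Qed.

Lemma mxtrace_projcomb x : \tr (projcomb x) = (\sum_i x i * prank i)%:C%C.
Proof.
rewrite raddf_sum rmorph_sum; apply: eq_bigr => i _.
by rewrite /= mxtraceZ mxtrace_proj rmorphM.
Qed.

Lemma trnorm_projcomb x : trnorm (projcomb x) = \sum_i `|x i| * prank i.
Proof.
rewrite /trnorm /mxsqrt (herm_op_projcomb x) projcombM mxfun_projcomb.
by rewrite mxtrace_projcomb; apply: eq_bigr => i _; rewrite -expr2 sqrtr_sqr.
Qed.

Lemma fidelity_projcomb x y :
  fidelity (projcomb x) (projcomb y) =
  (\sum_i Num.sqrt (x i) * Num.sqrt (y i) * prank i) ^+ 2.
Proof.
rewrite /fidelity /mxsqrt !mxfun_projcomb projcombM trnorm_projcomb.
by congr (_ ^+ 2); apply: eq_bigr => i _; rewrite ger0_norm ?mulr_ge0 ?sqrtr_ge0.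
Qed.

End ProjectorCombination.

Lemma relent_projcomb (R : realType) (I : finType) d (Pi : I -> 'M[R[i]]_d) x y :
  (forall i, herm_op (Pi i)) ->
  (forall i j, Pi i *m Pi j = if i == j then Pi i else 0) ->
  \sum_i Pi i = 1%:M ->
  relent (projcomb Pi x) (projcomb Pi y) =
  \sum_i x i * (ln (x i) - ln (y i)) * prank Pi i.
Proof.
move=> Pi_herm Pi_orth Pi_sum.
by rewrite /relent /mxln !mxfun_projcomb // projcombB projcombM // mxtrace_projcomb.
Qed.

Section PointMass.
Variables (R : realType) (I : finType) (t : I -> R) (i0 : I) (x : I -> R).
Hypothesis t_gt0 : forall i, 0 < t i.
Hypothesis x_ge0 : forall i, 0 <= x i.
Hypothesis x_norm : \sum_i x i * t i = 1.

Definition point_mass i := if i == i0 then (t i0)^-1 else 0.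

Lemma l1_dist_point_mass :
  \sum_i `|x i - point_mass i| * t i = 2 * (1 - x i0 * t i0).
Proof.
have off_i0 : \sum_(i | i != i0) x i * t i = 1 - x i0 * t i0.
  by rewrite -x_norm [in RHS](bigD1 i0) //= addrAC subrr add0r.
rewrite (bigD1 i0) //= (eq_bigr (fun i => x i * t i)) => [|i /negbTE ii0]; last first.
  by rewrite /point_mass ii0 subr0 ger0_norm.
have x0_le : x i0 * t i0 <= 1.
  rewrite -subr_ge0 -off_i0; apply: sumr_ge0 => i _.
  by rewrite mulr_ge0 // ltW.
rewrite off_i0 /point_mass eqxx ler0_norm; last first.
  by rewrite subr_le0 -(ler_pM2r (t_gt0 i0)) mulVf // lt0r_neq0.
by field; exact: lt0r_neq0.
Qed.

Lemma fidelity_point_mass :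
  (\sum_i Num.sqrt (x i) * Num.sqrt (point_mass i) * t i) ^+ 2 = x i0 * t i0.
Proof.
rewrite (bigD1 i0) //= big1 ?addr0 => [|i /negbTE ii0]; last first.
  by rewrite /point_mass ii0 sqrtr0 mulr0 mul0r.
rewrite /point_mass eqxx !exprMn !sqr_sqrtr ?invr_ge0 ?(ltW (t_gt0 i0)) //.
by field; exact: lt0r_neq0.
Qed.

Lemma relent_point_mass : 0 < x i0 ->
  \sum_i point_mass i * (ln (point_mass i) - ln (x i)) * t i = - ln (x i0 * t i0).
Proof.
move=> x0_gt0; rewrite (bigD1 i0) //= big1 ?addr0 => [|i /negbTE ii0]; last first.
  by rewrite /point_mass ii0 !mul0r.
rewrite /point_mass eqxx lnM ?lnV ?posrE //.
by field; exact: lt0r_neq0.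
Qed.

End PointMass.

Theorem corollary4 (R : realType) (d M : nat) (H : 'M[R[i]]_d)
  (lam : 'I_M.+1 -> R) (Pi : 'I_M.+1 -> 'M[R[i]]_d) (beta : R) :
  herm_op H ->
  (forall i j : 'I_M.+1, (i < j)%N -> lam i < lam j) ->
  (forall i, Pi i != 0) ->
  (forall i, herm_op (Pi i)) ->
  (forall i j, Pi i *m Pi j = if i == j then Pi i else 0) ->
  \sum_(i < M.+1) Pi i = 1%:M ->
  H = \sum_(i < M.+1) (lam i)%:C%C *: Pi i ->
  0 <= beta ->
  let gamma := (\tr (Pi ord0))^-1 *: Pi ord0 in
  let E := mxexp ((- beta)%:C%C *: H) in
  let tau := (\tr E)^-1 *: E in
  2^-1 * trnorm (tau - gamma) = 1 - fidelity tau gamma /\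
  relent gamma tau = - ln (fidelity tau gamma).
Proof.
move=> _ _ Pi_neq0 Pi_herm Pi_orth Pi_sum -> _ gamma E tau.
pose t := prank Pi.
have t_gt0 i : 0 < t i := prank_gt0 Pi_herm Pi_orth (Pi_neq0 i).
pose e i := expR (- beta * lam i).
pose Z := \sum_i e i * t i.
have Z_gt0 : 0 < Z.
  rewrite /Z (bigD1 ord0) //= ltr_pwDl ?mulr_gt0 ?expR_gt0 //.
  by apply: sumr_ge0 => i _; rewrite mulr_ge0 ?expR_ge0 ?ltW.
pose w i := Z^-1 * e i.
have w_gt0 i : 0 < w i by rewrite mulr_gt0 ?invr_gt0 ?expR_gt0.
have w_norm : \sum_i w i * t i = 1.
  by under eq_bigr do rewrite -mulrA; rewrite -mulr_sumr mulVf ?gt_eqF.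
have tauE : tau = projcomb Pi w.
  rewrite /tau /E projcombZ /mxexp mxfun_projcomb //.
  by rewrite mxtrace_projcomb // -fmorphV projcombZ.
have gammaE : gamma = projcomb Pi (point_mass t ord0).
  rewrite /gamma mxtrace_proj // -fmorphV /projcomb (bigD1 ord0) //=.
  rewrite big1 ?addr0 /point_mass ?eqxx // => i /negbTE ->.
  by rewrite scale0r.
have w_ge0 i : 0 <= w i := ltW (w_gt0 i).
rewrite tauE gammaE fidelity_projcomb // projcombB // trnorm_projcomb //.
rewrite relent_projcomb // fidelity_point_mass // l1_dist_point_mass //.
by rewrite relent_point_mass //; split=> //; field.
Qed.
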